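(* Let $(p_n)_n$, $(q_n)_n$ be real sequences with $0<p_n,q_n\le 1$, $p_nq_n\to 0$ and $\frac{p_nq_n^2n}{\log n}\to\infty$ as $n\to\infty$. Let $\rho_n=\frac{p_nq_n^2n}{1+\log n}$ and $r_n=\lceil \rho_n^{-1/3}p_n^{-1}\rceil$. Let $(F_n)_n$ and $(s_n)_n$ be real sequences with $F_n=O(p_nq_nn)$, $s_n=q_n(1+o(1))$, and $F_ns_n$ a nonnegative integer for every $n$, and let $B_n\sim\mathrm{Bin}(F_ns_n,(1-p_n)^{r_n})$. Then for every $\varepsilon>0$, \[ P\bigl(|B_n+F_n(1-s_n)-F_n(1-p_nq_n)^{r_n}|>\varepsilon p_n^2q_n^2nr_n\bigr)=o\!\left(\frac{p_n^2q_nr_n}{n^2}\right)\quad (n\to\infty). \]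
   Context: $\mathrm{Bin}(m,\theta)$ denotes the binomial distribution with $m$ trials and success probability $\theta$. Asymptotic notations $o$, $O$ refer to $n\to\infty$. *)

From mathcomp Require Import all_boot all_order all_algebra.
From mathcomp Require Import all_classical all_reals all_analysis.
Set Implicit Arguments. Unset Strict Implicit. Unset Printing Implicit Defensive.
Import Order.TTheory GRing.Theory Num.Theory.
Local Open Scope ring_scope.

Definition rho {R : realType} (p q : nat -> R) (n : nat) : R :=
  p n * q n ^+ 2 * n%:R / (1 + ln n%:R).

(* r_n = ceil(rho_n^(-1/3) p_n^(-1)), as a natural number (it is >= 1 since
   the argument is > 0 for n >= 1) *)
Definition rr {R : realType} (p q : nat -> R) (n : nat) : nat :=
  `| Num.ceil (powR (rho p q n) (- (1/3)) / p n) |%N.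

(* Let th = (1 - p)^r and m = F s, so that B ~ Bin(m, th).  Since m th = F s - F s (1 - th),
   B + F (1 - s) - F (1 - pq)^r is the fluctuation B - m th plus the deterministic drift
   F ((1 - (1 - pq)^r) - q (1 - th)) - F q e (1 - th), where s = q (1 + e).  Second-order
   Bonferroni bounds give |1 - (1 - pq)^r - q (1 - (1 - p)^r)| <= q C(r,2) p^2, and
   (r - 1) p <= rho^(-1/3) -> 0, so the drift is o(V) with V = p^2 q^2 n r.
   The fluctuation is handled by a Chernoff bound for the number m - B of failures: its mean
   m (1 - th) <= m r p = O(V) is of the order of the deviation itself, so the tail is at most
   2 exp(-c V).  Finally V >= p q^2 n rho^(-1/3) = rho^(2/3) (1 + log n), hence
   exp(-c V) <= n^-4 eventually, which is o(p^2 q r / n^2). *)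

From mathcomp Require Import all_boot all_order all_algebra.
From mathcomp Require Import all_classical all_reals all_analysis.
From mathcomp Require Import ring lra.
Import Order.TTheory GRing.Theory Num.Theory.
Local Open Scope classical_set_scope.
Local Open Scope ring_scope.

Section binomial_chernoff.
Context {R : realType}.
Implicit Types (x y z th mu lam t : R) (m : nat).

Lemma expR_le_quadratic x : x <= 1 / 2 -> expR x <= 1 + x + 2 * x ^+ 2.
Proof.
move=> x_le.
have expR_onem : expR x * (1 - x) <= 1.
  apply: le_trans (ler_wpM2l (expR_ge0 x) (expR_ge1Dx (- x))) _.
  by rewrite -expRD subrr expR0.
rewrite -(@ler_pM2r _ (1 - x)); last lra.
apply: le_trans expR_onem _.
have : 0 <= x ^+ 2 * (1 - 2 * x) by rewrite mulr_ge0 ?sqr_ge0 //; lra.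
have -> : (1 + x + 2 * x ^+ 2) * (1 - x) = 1 + x ^+ 2 * (1 - 2 * x) by ring.
lra.
Qed.

Lemma exprD1_le_expR x m : -1 <= x -> (1 + x) ^+ m <= expR (m%:R * x).
Proof.
move=> x_ge; rewrite expRM_natl lerXn2r ?nnegrE ?expR_ge0 ?expR_ge1Dx //.
lra.
Qed.

Lemma binomial_pmf_sum_exprn m th z :
  \sum_(k < m.+1) binomial_pmf m th k * z ^+ (m - k) = ((1 - th) * z + th) ^+ m.
Proof.
rewrite exprDn; apply: eq_bigr => k _.
rewrite /binomial_pmf /unstable.onem exprMn; set c := 'C(m, k).
by rewrite -(mulr_natr _ c) -[in RHS](mulr_natr _ c); ring.
Qed.

(* Centred at the number m - k of failures, whose mean m (1 - th) is the variance proxy. *)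
Lemma binomial_mgf_le m th mu : 0 <= th <= 1 -> mu <= 1 / 2 ->
  \sum_(k < m.+1) binomial_pmf m th k * expR (mu * (m%:R * th - k%:R))
  <= expR (2 * (m%:R * (1 - th)) * mu ^+ 2).
Proof.
move=> /andP[th0 th1] mu_le_half; set M := m%:R * (1 - th).
have M0 : 0 <= M by rewrite mulr_ge0 //; lra.
have shift k : (k <= m)%N ->
    expR (mu * (m%:R * th - k%:R)) = expR (- (mu * M)) * expR mu ^+ (m - k).
  by move=> km; rewrite -expRM_natl -expRD natrB // /M; congr expR; ring.
rewrite (eq_bigr (fun k : 'I_m.+1 =>
    expR (- (mu * M)) * (binomial_pmf m th k * expR mu ^+ (m - k)))); last first.
  move=> k _; rewrite shift; last by rewrite -ltnS ltn_ord.
  by rewrite mulrCA.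
rewrite -mulr_sumr binomial_pmf_sum_exprn.
have -> : (1 - th) * expR mu + th = 1 + (1 - th) * (expR mu - 1) by ring.
have mgf_le : (1 + (1 - th) * (expR mu - 1)) ^+ m
    <= expR (m%:R * ((1 - th) * (expR mu - 1))).
  apply: exprD1_le_expR.
  have : 0 <= (1 - th) * expR mu by rewrite mulr_ge0 ?expR_ge0 //; lra.
  lra.
apply: le_trans (ler_wpM2l (expR_ge0 _) mgf_le) _.
rewrite -expRD ler_expR.
have quad := expR_le_quadratic _ mu_le_half.
have : M * (expR mu - 1 - mu) <= M * (2 * mu ^+ 2) by apply: ler_wpM2l => //; lra.
have -> : m%:R * ((1 - th) * (expR mu - 1)) = M * (expR mu - 1) by rewrite /M; ring.
lra.
Qed.

Lemma binomial_prob_le_sum m th (U : set nat) (f : nat -> R) : 0 <= th <= 1 ->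
  (forall k, 0 <= f k) -> (forall k, U k -> 1 <= f k) ->
  (binomial_prob m th U <= (\sum_(k < m.+1) binomial_pmf m th k * f k)%:E)%E.
Proof.
move=> /andP[th0 th1] f_ge0 f_ge1; rewrite (@binomial_probE R m th th0 th1 U).
under eq_bigr do rewrite diracE -EFinM.
rewrite sumEFin lee_fin; apply: ler_sum => k _.
apply: ler_wpM2l => //.
by case: (boolP (nat_of_ord k \in U)) => [/set_mem/f_ge1|].
Qed.

Lemma one_le_expR_sym lam t y : 0 <= lam -> t < `|y| ->
  1 <= expR (lam * y - lam * t) + expR (- lam * y - lam * t).
Proof.
have expR_ge1 x : 0 <= x -> 1 <= expR x by move=> x0; rewrite leNgt expR_lt1 -leNgt.
move=> lam0; rewrite ltr_normr => /orP[] t_lt.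
- have := expR_ge0 (- lam * y - lam * t).
  suff : 1 <= expR (lam * y - lam * t) by lra.
  by apply: expR_ge1; rewrite -mulrBr mulr_ge0 // subr_ge0 ltW.
- have := expR_ge0 (lam * y - lam * t).
  suff : 1 <= expR (- lam * y - lam * t) by lra.
  by apply: expR_ge1; rewrite mulNr -mulrN -mulrBr mulr_ge0 // subr_ge0 ltW.
Qed.

Lemma binomial_prob_dev_le m th lam t (U : set nat) :
  0 <= th <= 1 -> 0 <= lam <= 1 / 2 ->
  (forall k, U k -> t < `|k%:R - m%:R * th|) ->
  (binomial_prob m th U
   <= (2 * expR (2 * (m%:R * (1 - th)) * lam ^+ 2 - lam * t))%:E)%E.
Proof.
move=> th01 /andP[lam0 lam_le_half] dev.
pose f k := expR (lam * (m%:R * th - k%:R) - lam * t)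
          + expR (- lam * (m%:R * th - k%:R) - lam * t).
apply: le_trans (@binomial_prob_le_sum m th U f th01 _ _) _.
- by move=> k; rewrite addr_ge0 ?expR_ge0.
- by move=> k /dev; rewrite distrC; exact: one_le_expR_sym.
rewrite lee_fin.
have -> : \sum_(k < m.+1) binomial_pmf m th k * f k = expR (- (lam * t)) *
   (\sum_(k < m.+1) binomial_pmf m th k * expR (lam * (m%:R * th - k%:R))
  + \sum_(k < m.+1) binomial_pmf m th k * expR (- lam * (m%:R * th - k%:R))).
  rewrite mulrDr !mulr_sumr -big_split /=; apply: eq_bigr => k _.
  by rewrite /f !expRD; ring.
have lamN_le_half : - lam <= 1 / 2 by lra.
have mgf := binomial_mgf_le m _ _ th01 lam_le_half.
have mgfN := binomial_mgf_le m _ _ th01 lamN_le_half.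
rewrite sqrrN in mgfN.
rewrite expRD mulrC mulrA ler_pM2r ?expR_gt0 //; lra.
Qed.

End binomial_chernoff.

Section onem_exprn.
Context {R : realType}.
Implicit Types (x c : R) (r : nat).

Lemma onem_exprn_ge x r : x <= 1 -> 1 - r%:R * x <= (1 - x) ^+ r.
Proof.
move=> x_le1; elim: r => [|r IH]; first by rewrite expr0 mul0r subr0.
rewrite exprS; apply: le_trans (ler_wpM2l _ IH); last lra.
have : 0 <= r%:R * x ^+ 2 by rewrite mulr_ge0 ?sqr_ge0.
rewrite -natr1; lra.
Qed.

Lemma onem_exprn_le x r : 0 <= x <= 1 ->
  (1 - x) ^+ r <= 1 - r%:R * x + r%:R * (r%:R - 1) / 2 * x ^+ 2.
Proof.
move=> /andP[x0 x1]; elim: r => [|r IH]; first by rewrite expr0 !mul0r subr0 addr0.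
rewrite exprS; apply: le_trans (ler_wpM2l _ IH) _; first lra.
have : 0 <= r%:R * (r%:R - 1) / 2 * x ^+ 3.
  rewrite mulr_ge0 ?exprn_ge0 // mulr_ge0 //.
  by case: r {IH} => [|r]; rewrite ?mul0r // mulr_ge0 // -[r.+1%:R]natr1 addrK.
have -> : (1 - x) * (1 - r%:R * x + r%:R * (r%:R - 1) / 2 * x ^+ 2) =
  1 - r.+1%:R * x + r.+1%:R * (r.+1%:R - 1) / 2 * x ^+ 2
  - r%:R * (r%:R - 1) / 2 * x ^+ 3 by rewrite -[r.+1%:R]natr1; field.
lra.
Qed.

Lemma onem_exprnM_sub_le c x r : 0 <= c <= 1 -> 0 <= x <= 1 ->
  `|1 - (1 - x * c) ^+ r - c * (1 - (1 - x) ^+ r)|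
  <= c * (r%:R * (r%:R - 1) / 2 * x ^+ 2).
Proof.
move=> /andP[c0 c1] x01; have /andP[x0 x1] := x01.
have cx01 : 0 <= x * c <= 1 by rewrite mulr_ge0 //= mulr_ile1.
have b0 : 0 <= r%:R * (r%:R - 1) / 2 :> R.
  by case: r => [|r]; rewrite ?mul0r // !mulr_ge0 // -[r.+1%:R]natr1 addrK.
set b := r%:R * (r%:R - 1) / 2 in b0 *.
have := onem_exprn_ge _ r x1; have := onem_exprn_le _ r x01.
have := onem_exprn_ge _ r (andP cx01).2; have := onem_exprn_le _ r cx01.
rewrite -/b exprMn => cx_le cx_ge x_le x_ge.
have bx0 : 0 <= b * x ^+ 2 by rewrite mulr_ge0 // sqr_ge0.
have c2_le := ler_piMr (mulr_ge0 c0 bx0) c1.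
have cx_le' := ler_wpM2l c0 x_le; have cx_ge' := ler_wpM2l c0 x_ge.
rewrite ler_norml; apply/andP; split; lra.
Qed.

End onem_exprn.

Section rho_asymptotics.
Context {R : realType}.
Implicit Types (p q : nat -> R) (n : nat).

Definition rho_invcbrt p q n : R := powR (rho p q n) (- (1 / 3)).

Lemma powR_invcbrt_cube (x : R) : 0 <= x -> (x `^ (- (1 / 3))) ^+ 3 = x^-1.
Proof.
move=> x0; rewrite -powR_mulrn ?powR_ge0 // -powRrM.
have -> : - (1 / 3) * 3%:R = - 1 :> R by field.
by rewrite powRN powRr1.
Qed.

Lemma rho_invcbrt_cube p q n : 0 < p n -> 0 < q n -> (0 < n)%N ->
  p n * q n ^+ 2 * n%:R * rho_invcbrt p q n ^+ 3 = 1 + ln n%:R.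
Proof.
move=> p0 q0 n0.
have ln1_gt0 : 0 < 1 + ln n%:R :> R.
  by have := @ln_ge0 R n%:R; rewrite ler1n => /(_ n0) ?; lra.
have W0 : 0 < p n * q n ^+ 2 * n%:R by rewrite !mulr_gt0 ?exprn_gt0 ?ltr0n.
rewrite /rho_invcbrt powR_invcbrt_cube; last by rewrite /rho divr_ge0 ?ltW.
by rewrite /rho invf_div mulrC divfK ?gt_eqF.
Qed.

Lemma rho_cvgy p q : (forall n, 0 < p n) -> (forall n, 0 < q n) ->
  (fun n => p n * q n ^+ 2 * n%:R / ln n%:R) @ \oo --> +oo ->
  rho p q n @[n --> \oo] --> +oo.
Proof.
move=> p0 q0 /cvgryPge ratio_big; apply/cvgryPge => A.
near=> n.
have ln_ge1 : 1 <= ln n%:R :> R.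
  have e_lt_n : expR 1 < n%:R :> R by near: n; exact: nbhs_infty_gtr.
  rewrite -[X in X <= _](expRK 1) ler_ln ?posrE ?expR_gt0 ?ltW //.
  exact: lt_trans (expR_gt0 1) e_lt_n.
have W0 : 0 <= p n * q n ^+ 2 * n%:R.
  by rewrite mulr_ge0 // mulr_ge0 ?exprn_ge0 // ltW.
have ratio_ge : 2 * A <= p n * q n ^+ 2 * n%:R / ln n%:R.
  by near: n; exact: ratio_big.
rewrite ler_pdivlMr in ratio_ge; last lra.
rewrite /rho ler_pdivlMr; last lra.
case: (lerP A 0) => A0; last nra.
by apply: le_trans W0; rewrite mulr_le0_ge0 //; lra.
Unshelve. all: by end_near.
Qed.

Lemma rho_invcbrt_cvg0 p q : (forall n, 0 < p n) -> (forall n, 0 < q n) ->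
  (fun n => p n * q n ^+ 2 * n%:R / ln n%:R) @ \oo --> +oo ->
  rho_invcbrt p q n @[n --> \oo] --> 0.
Proof.
move=> p0 q0 ratio_big; apply/cvgr0Pnorm_le => b b0.
have /cvgryPge rho_big := rho_cvgy _ _ p0 q0 ratio_big.
have b3_gt0 : 0 < (b ^+ 3)^-1 by rewrite invr_gt0 exprn_gt0.
near=> n.
have rho_ge : (b ^+ 3)^-1 <= rho p q n by near: n; exact: rho_big.
have rho_gt0 := lt_le_trans b3_gt0 rho_ge.
rewrite ger0_norm ?powR_ge0 // -(@ler_pXn2r _ 3) // ?nnegrE ?powR_ge0 ?(ltW b0) //.
rewrite powR_invcbrt_cube ?(ltW rho_gt0) // -[b ^+ 3]invrK lef_pV2 ?posrE //.
Unshelve. all: by end_near.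
Qed.

Lemma rr_mul_bounds p q n : 0 < p n ->
  rho_invcbrt p q n <= (rr p q n)%:R * p n < rho_invcbrt p q n + p n.
Proof.
move=> p0; set u := rho_invcbrt p q n.
have u_div_ge0 : 0 <= u / p n by rewrite divr_ge0 ?powR_ge0 ?ltW.
have -> : (rr p q n)%:R = (Num.ceil (u / p n))%:~R :> R.
  by rewrite natr_absz ger0_norm // ceil_ge0 (lt_le_trans (ltrN10 R)).
rewrite -ler_pdivrMr // ceil_ge /=.
have := ceilB1_lt (u / p n); rewrite intrB ltr_pdivlMr // => ceil_lt.
lra.
Qed.

End rho_asymptotics.

Lemma two_expR_ln_le {R : realType} (N X delta : R) : 1 <= N ->
  1 <= X * N -> 2 <= delta * N -> 2 * expR (- (4 * ln N)) <= delta * (X / N ^+ 2).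
Proof.
move=> N_ge1 XN_ge1 deltaN_ge2.
have N_gt0 : 0 < N by lra.
rewrite expRN expRM_natl lnK ?posrE // ler_pdivrMr ?exprn_gt0 //.
have -> : delta * (X / N ^+ 2) * N ^+ 4 = (delta * N) * (X * N).
  by field; rewrite gt_eqF.
have : 0 <= (delta * N - 2) * (X * N - 1) by rewrite mulr_ge0 //; lra.
lra.
Qed.

Lemma chernoff_constants {R : realType} (eps C0 : R) : 0 < eps -> 0 < C0 ->
  exists lam a : R, [/\ 0 <= lam <= 1 / 2, 16 * C0 * lam <= eps,
    0 < a <= 1, 3 * a * C0 <= eps & 16 * a <= lam * eps].
Proof.
move=> eps_gt0 C0_gt0.
pose lam := Num.min (1 / 2) (eps / (16 * C0)).
have lam_gt0 : 0 < lam by rewrite lt_min !divr_gt0 // mulr_gt0.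
pose a := Num.min 1 (Num.min (eps / (3 * C0)) (lam * eps / 16)).
exists lam, a; split.
- by rewrite ltW //= ge_min lexx.
- by rewrite mulrC -ler_pdivlMr ?mulr_gt0 // ge_min lexx orbT.
- by rewrite lt_min ltr01 lt_min !divr_gt0 ?mulr_gt0 // ge_min lexx.
- rewrite (_ : 3 * a * C0 = a * (3 * C0)); last by ring.
  by rewrite -ler_pdivlMr ?mulr_gt0 // !ge_min lexx !orbT.
- by rewrite mulrC -ler_pdivlMr // !ge_min lexx !orbT.
Qed.

Section binomial_deviation.
Context {R : realType}.
Variables (P Q N u F s err C0 a eps lam delta : R) (r m : nat).
Hypotheses (P_gt0 : 0 < P) (P_le1 : P <= 1) (Q_gt0 : 0 < Q) (Q_le1 : Q <= 1).
Hypotheses (N_ge1 : 1 <= N) (u_ge0 : 0 <= u).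
Hypotheses (u_le_rP : u <= r%:R * P) (rP_lt : r%:R * P < u + P).
Hypotheses (F_le : `|F| <= C0 * (P * Q * N)) (s_eq : s = Q * (1 + err)).
Hypotheses (m_eq : F * s = m%:R) (err_le : `|err| <= a) (u_le : u <= a).
Hypotheses (a_le1 : a <= 1) (a_C0 : 3 * a * C0 <= eps).

Local Notation th := ((1 - P) ^+ r).
Local Notation V := (P ^+ 2 * Q ^+ 2 * N * r%:R).

Lemma th_bounds : 0 <= th <= 1.
Proof.
have P0 : 0 <= 1 - P by rewrite subr_ge0.
by rewrite exprn_ge0 // exprn_ile1 // gerBl ltW.
Qed.

Lemma onem_th_bounds : 0 <= 1 - th <= r%:R * P.
Proof.
have /andP[_ th_le1] := th_bounds.
by rewrite subr_ge0 th_le1 lerBlDr addrC -lerBlDr onem_exprn_ge.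
Qed.

Lemma V_ge0 : 0 <= V.
Proof.
have P0 := ltW P_gt0; have Q0 := ltW Q_gt0; have N0 := le_trans ler01 N_ge1.
by rewrite !mulr_ge0.
Qed.

Lemma deviation_decomp (k : R) :
  k + F * (1 - s) - F * (1 - P * Q) ^+ r
  = (k - m%:R * th) + F * ((1 - (1 - P * Q) ^+ r - Q * (1 - th)) - Q * err * (1 - th)).
Proof. by rewrite -m_eq s_eq; ring. Qed.

Lemma drift_le :
  `|F * ((1 - (1 - P * Q) ^+ r - Q * (1 - th)) - Q * err * (1 - th))| <= eps * V / 2.
Proof.
have /andP[th0 th_le] := onem_th_bounds.
have Q0 : 0 <= Q by exact: ltW.
have rP0 : 0 <= r%:R * P := le_trans th0 th_le.
have gap_le : `|1 - (1 - P * Q) ^+ r - Q * (1 - th)| <= Q * (r%:R * P) * a / 2.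
  have Q01 : 0 <= Q <= 1 by rewrite Q0.
  have P01 : 0 <= P <= 1 by rewrite ltW.
  apply: le_trans (onem_exprnM_sub_le _ _ r Q01 P01) _.
  have -> : r%:R * (r%:R - 1) / 2 * P ^+ 2 = r%:R * P * (r%:R * P - P) / 2 by ring.
  have rP_sub : r%:R * P - P <= a by have := rP_lt; have := u_le; lra.
  by have := ler_wpM2l Q0 (ler_wpM2l rP0 rP_sub); lra.
have err_term_le : `|Q * err * (1 - th)| <= Q * (r%:R * P) * a.
  rewrite !normrM (ger0_norm Q0) (ger0_norm th0).
  by have := ler_wpM2l Q0 (ler_pM (normr_ge0 err) th0 err_le th_le); lra.
have sum_le : `|(1 - (1 - P * Q) ^+ r - Q * (1 - th)) - Q * err * (1 - th)|
    <= 3 / 2 * a * Q * (r%:R * P).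
  by apply: le_trans (ler_normB _ _) _; lra.
rewrite normrM; apply: le_trans (ler_pM (normr_ge0 _) (normr_ge0 _) F_le sum_le) _.
have -> : C0 * (P * Q * N) * (3 / 2 * a * Q * (r%:R * P)) = 3 * a * C0 * V / 2 by ring.
by have := ler_wpM2r V_ge0 a_C0; lra.
Qed.

Lemma variance_le : m%:R * (1 - th) <= 2 * C0 * V.
Proof.
have /andP[th0 th_le] := onem_th_bounds.
have Q0 : 0 <= Q by exact: ltW.
have m_le : m%:R <= C0 * (P * Q * N) * (Q * 2).
  rewrite -m_eq s_eq; apply: le_trans (ler_norm _) _.
  rewrite normrM (normrM Q) (ger0_norm Q0).
  apply: ler_pM; rewrite ?mulr_ge0 //.
  rewrite ler_wpM2l //; apply: le_trans (ler_normD _ _) _.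
  by rewrite normr1; have := err_le; have := a_le1; lra.
have := ler_pM (ler0n _ m) th0 m_le th_le.
by have -> : C0 * (P * Q * N) * (Q * 2) * (r%:R * P) = 2 * C0 * V by ring.
Qed.

(* [u] plays the role of rho_n^(-1/3). *)
Hypothesis u_cube : P * Q ^+ 2 * N * u ^+ 3 = 1 + ln N.

Lemma ln_le_sqr_V : 1 + ln N <= u ^+ 2 * V.
Proof.
have W0 : 0 <= u ^+ 2 * (P * Q ^+ 2 * N).
  have P0 := ltW P_gt0; have Q0 := ltW Q_gt0; have N0 := le_trans ler01 N_ge1.
  by rewrite !mulr_ge0.
have -> : u ^+ 2 * V = u ^+ 2 * (P * Q ^+ 2 * N) * (r%:R * P) by ring.
rewrite -u_cube (_ : _ * u ^+ 3 = u ^+ 2 * (P * Q ^+ 2 * N) * u); last by ring.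
exact: ler_wpM2l.
Qed.

Lemma PPQrN_ge1 : 1 <= P ^+ 2 * Q * r%:R * N.
Proof.
have X0 : 0 <= P ^+ 2 * Q * r%:R * N.
  have P0 := ltW P_gt0; have Q0 := ltW Q_gt0; have N0 := le_trans ler01 N_ge1.
  by rewrite !mulr_ge0.
have V_le : V <= P ^+ 2 * Q * r%:R * N.
  by rewrite (_ : V = P ^+ 2 * Q * r%:R * N * Q); [exact: ler_piMr | ring].
have u2_le1 : u ^+ 2 <= 1 by rewrite exprn_ile1 // (le_trans u_le).
have := ler_wpM2r V_ge0 u2_le1; have := ln_le_sqr_V; have := ln_ge0 N_ge1.
lra.
Qed.

Hypotheses (lam01 : 0 <= lam <= 1 / 2) (lam_C0 : 16 * C0 * lam <= eps).
Hypotheses (a_lam : 16 * a <= lam * eps) (delta_N : 2 <= delta * N).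

Lemma chernoff_exponent_le :
  2 * (m%:R * (1 - th)) * lam ^+ 2 - lam * (eps * V / 2) <= - (4 * ln N).
Proof.
have /andP[lam0 _] := lam01.
have var := ler_wpM2r (sqr_ge0 lam) variance_le.
have C0_lam := ler_wpM2r (mulr_ge0 lam0 V_ge0) lam_C0.
have u2_le : 16 * u ^+ 2 <= lam * eps.
  rewrite expr2; have := ler_pM u_ge0 u_ge0 u_le (le_trans u_le a_le1).
  by have := a_lam; lra.
have := ler_wpM2r V_ge0 u2_le; have := ln_le_sqr_V.
lra.
Qed.

Lemma binomial_deviation_le :
  (binomial_prob m th
     [set k : nat | (eps * V < `|k%:R + F * (1 - s) - F * (1 - P * Q) ^+ r|)%R]
   <= (delta * (P ^+ 2 * Q * r%:R / N ^+ 2))%:E)%E.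
Proof.
apply: le_trans (binomial_prob_dev_le m _ lam (eps * V / 2) _ th_bounds lam01 _) _.
  move=> k /=; rewrite deviation_decomp => dev.
  have := ler_normD (k%:R - m%:R * th)
    (F * ((1 - (1 - P * Q) ^+ r - Q * (1 - th)) - Q * err * (1 - th))).
  by have := drift_le; lra.
rewrite lee_fin; apply: le_trans _ (two_expR_ln_le _ _ _ N_ge1 PPQrN_ge1 delta_N).
by rewrite ler_pM2l // ler_expR chernoff_exponent_le.
Qed.

End binomial_deviation.

Theorem lemma8 (R : realType) (p q F s : nat -> R) (m : nat -> nat) :
  (forall n, 0 < p n <= 1) ->
  (forall n, 0 < q n <= 1) ->
  (fun n => p n * q n) @ \oo --> 0 ->
  (fun n => p n * q n ^+ 2 * n%:R / ln n%:R) @ \oo --> +oo ->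
  (* F_n = O(p_n q_n n) *)
  (exists C : R, \forall n \near \oo, `|F n| <= C * (p n * q n * n%:R)) ->
  (* s_n = q_n (1 + o(1)) *)
  (exists e : nat -> R, e @ \oo --> 0 /\ forall n, s n = q n * (1 + e n)) ->
  (* F_n s_n is a nonnegative integer m_n for every n *)
  (forall n, F n * s n = (m n)%:R) ->
  forall eps : R, 0 < eps ->
  (* P(|B_n + F_n(1-s_n) - F_n(1-p_nq_n)^{r_n}| > eps p^2 q^2 n r) = o(p^2 q r / n^2),
     with B_n ~ Bin(m_n, (1-p_n)^{r_n}) *)
  forall delta : R, 0 < delta ->
  \forall n \near \oo,
    (binomial_prob (m n) ((1 - p n) ^+ rr p q n)
       [set k : nat | (eps * (p n ^+ 2 * q n ^+ 2 * n%:R * (rr p q n)%:R) <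
          `| k%:R + F n * (1 - s n) - F n * (1 - p n * q n) ^+ rr p q n |)%R]
    <= (delta * (p n ^+ 2 * q n * (rr p q n)%:R / n%:R ^+ 2))%:E)%E.
Proof.
move=> p_bd q_bd _ ratio_big [C F_big] [err [err_cvg0 s_eq]] m_eq.
move=> eps eps_gt0 delta delta_gt0.
have p_gt0 n : 0 < p n by case/andP: (p_bd n).
have q_gt0 n : 0 < q n by case/andP: (q_bd n).
pose C0 : R := `|C| + 1.
have C0_gt0 : 0 < C0 := ltr_pwDr ltr01 (normr_ge0 C).
have [lam [a [lam01 lam_C0 /andP[a_gt0 a_le1] a_C0 a_lam]]] :=
  chernoff_constants _ _ eps_gt0 C0_gt0.
have /cvgr0Pnorm_le u_small := rho_invcbrt_cvg0 _ _ p_gt0 q_gt0 ratio_big.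
move/cvgr0Pnorm_le: err_cvg0 => err_small.
near=> n.
have /andP[u_le_rP rP_lt] := rr_mul_bounds p q n (p_gt0 n).
have n_gt0 : (0 < n)%N by near: n; exists 1%N.
apply: (@binomial_deviation_le _ _ _ _ (rho_invcbrt p q n) _ _ (err n) C0 a _ lam)
  => //.
- by case/andP: (p_bd n).
- by case/andP: (q_bd n).
- by rewrite ler1n.
- exact: powR_ge0.
- have F_le : `|F n| <= C * (p n * q n * n%:R) by near: n; exact: F_big.
  apply: le_trans F_le _; apply: ler_wpM2r.
    exact: mulr_ge0 (mulr_ge0 (ltW (p_gt0 n)) (ltW (q_gt0 n))) (ler0n _ n).
  by rewrite (le_trans (ler_norm C)) // lerDl.
- by near: n; exact: err_small.
- by apply: le_trans (ler_norm _) _; near: n; exact: u_small.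
- exact: rho_invcbrt_cube.
- rewrite -ler_pdivrMl //; apply: ltW.
  by near: n; exact: nbhs_infty_gtr.
Unshelve. all: by end_near.
Qed.
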